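(* Let $L>0$, let $K$ be a positive integer, $\Delta x = L/K$, let $\Delta t>0$, $\alpha\in\mathbb{R}$, $\beta\in\mathbb{R}\setminus\{0\}$, and $q>1$. Suppose $u^{(0)},u^{(1)},\dots,u^{(m)}$ are $K$-periodic grid functions such that, for each $n=0,\dots,m-1$, $u^{(n+1)}$ is a solution of the energy-conservative scheme at step $n$ (see context), and let $r$ satisfy $$ r \ge \max_{m'\le m}\|u^{(m')}\|_\infty . $$ Define $$\varepsilon_1(q,r,\Delta x) = (q-1)(\Delta x)^3\left[\frac{|\alpha|}{6}(\Delta x)^2(q^2+q+1)r + \frac{3}{2}|\beta|(q+1)\right]^{-1},$$ $$\varepsilon_2(q,r,\Delta x) = (\Delta x)^3\left[\frac{|\alpha|}{6}(\Delta x)^2(2q+1)r + \frac{3}{2}|\beta|\right]^{-1}.$$ If $\Delta t < \min\{\varepsilon_1(q,r,\Delta x),\varepsilon_2(q,r,\Delta x)\}$, then the scheme at step $m$ admits a unique solution $u^{(m+1)}$ satisfying $\|u^{(m+1)}\|_\infty \le qr$.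
   Context: Grid functions are real sequences $v=(v_k)_{k\in\mathbb{Z}}$ with $v_{k+K}=v_k$. Define $\delta^{\langle 1\rangle}_x v_k = (v_{k+1}-v_{k-1})/(2\Delta x)$, $\delta^{\langle 2\rangle}_x v_k = (v_{k+1}-2v_k+v_{k-1})/(\Delta x)^2$, and $\|v\|_\infty=\max_k|v_k|$. For a sequence of grid functions $v^{(n)}$, let $\delta^+_t v^{(n)}_k = (v^{(n+1)}_k - v^{(n)}_k)/\Delta t$ and $\mu^+_t v^{(n)}_k = (v^{(n+1)}_k+v^{(n)}_k)/2$. Given $u^{(n)}$, a grid function $u^{(n+1)}$ is a solution of the scheme at step $n$ if for all $k\in\mathbb{Z}$ $$\delta^+_t u^{(n)}_k = -\frac{\alpha}{6}\,\delta^{\langle 1\rangle}_x\Big\{(u^{(n+1)}_k)^2 + u^{(n+1)}_k u^{(n)}_k + (u^{(n)}_k)^2\Big\} + \beta\,\delta^{\langle 1\rangle}_x\delta^{\langle 2\rangle}_x \mu^+_t u^{(n)}_k .$$ This is a discretization of the KdV equation $u_t=-\alpha u u_x+\beta u_{xxx}$ with $L$-periodic boundary conditions. *)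

From Stdlib Require Import Reals Lra Lia ZArith List.
Open Scope R_scope.

Definition grid := Z -> R.

Definition periodic (K : nat) (v : grid) : Prop :=
  forall k : Z, v (k + Z.of_nat K)%Z = v k.

Definition d1 (dx : R) (v : grid) : grid :=
  fun k => (v (k + 1)%Z - v (k - 1)%Z) / (2 * dx).

Definition d2 (dx : R) (v : grid) : grid :=
  fun k => (v (k + 1)%Z - 2 * v k + v (k - 1)%Z) / (dx ^ 2).

(* Max norm of a K-periodic grid function: max_k |v_k| = max over one period
   k = 0..K-1 (0 for K = 0, never used since K > 0). *)
Definition supnorm (K : nat) (v : grid) : R :=
  fold_right Rmax 0 (map (fun i => Rabs (v (Z.of_nat i))) (seq 0 K)).

Definition scheme_step (alpha beta dt dx : R) (un un1 : grid) : Prop :=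
  forall k : Z,
    (un1 k - un k) / dt =
      - (alpha / 6) * d1 dx (fun j => un1 j ^ 2 + un1 j * un j + un j ^ 2) k
      + beta * d1 dx (d2 dx (fun j => (un1 j + un j) / 2)) k.

Definition kdv_eps1 (alpha beta q r dx : R) : R :=
  (q - 1) * dx ^ 3 /
    (Rabs alpha / 6 * dx ^ 2 * (q ^ 2 + q + 1) * r + 3 / 2 * Rabs beta * (q + 1)).

Definition kdv_eps2 (alpha beta q r dx : R) : R :=
  dx ^ 3 /
    (Rabs alpha / 6 * dx ^ 2 * (2 * q + 1) * r + 3 / 2 * Rabs beta).

From Pilot Require Import Defs.
From Stdlib Require Import Reals Lra Lia ZArith List.
From Coquelicot Require Import Rcomplements.
Open Scope R_scope.

(* Write the scheme as w = u + dt F(u, w), where F is its right-hand side.  With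
   dx = L/K, on grids bounded by q r the map w |-> u + dt F(u, w) has values bounded
   by r + dt |F| <= q r when dt < eps1, and is Lipschitz in the sup norm with
   constant dt (|alpha|/6 (2q+1) r / dx + 3/2 |beta| / dx^3) < 1 when dt < eps2.
   The contraction argument, run coordinatewise on grids, yields a unique fixed
   point in this ball.  As the map commutes with translation by K, the translate
   of the fixed point is again a fixed point, so uniqueness makes it K-periodic. *)

Definition bounded_by (B : R) (v : grid) : Prop := forall j, Rabs (v j) <= B.

Lemma bounded_by_ge0 B v : bounded_by B v -> 0 <= B.
Proof. intro Hv. exact (Rle_trans _ _ _ (Rabs_pos (v 0%Z)) (Hv 0%Z)). Qed.

Lemma bounded_by_between B v j : bounded_by B v -> - B <= v j <= B.
Proof. intro Hv. apply Rabs_le_between, Hv. Qed.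

Lemma bounded_by_sub A B a b :
  bounded_by A a -> bounded_by B b -> bounded_by (A + B) (fun j => a j - b j).
Proof.
  intros Ha Hb j. unfold Rminus. eapply Rle_trans; [apply Rabs_triang|].
  rewrite Rabs_Ropp. apply Rplus_le_compat; [apply Ha|apply Hb].
Qed.

Lemma Rabs_div_le x y B : 0 < y -> Rabs x <= B -> Rabs (x / y) <= B / y.
Proof.
  intros Hy Hx. rewrite Rabs_div, (Rabs_pos_eq y) by lra.
  apply Rmult_le_compat_r; [apply Rlt_le, Rinv_0_lt_compat, Hy|exact Hx].
Qed.

Lemma geometric_eventually_lt c C eps : 0 <= c < 1 -> 0 < eps -> exists N, C * c ^ N < eps.
Proof.
  intros Hc Heps. pose proof (Rabs_pos C).
  destruct (pow_lt_1_zero c ltac:(rewrite Rabs_pos_eq; lra) (eps / (Rabs C + 1)))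
    as [N HN]; [apply Rdiv_lt_0_compat; lra|].
  exists N. specialize (HN N (le_n N)).
  rewrite Rabs_pos_eq in HN by (apply pow_le; lra).
  rewrite <- Rlt_div_r in HN by lra.
  pose proof (Rle_abs C). pose proof (pow_le c N (proj1 Hc)). nra.
Qed.

Lemma eq0_of_geometric_bound c C x : 0 <= c < 1 -> (forall n, Rabs x <= C * c ^ n) -> x = 0.
Proof.
  intros Hc Hx. destruct (Req_dec x 0) as [|Hx0]; [assumption|].
  destruct (geometric_eventually_lt c C (Rabs x) Hc (Rabs_pos_lt x Hx0)) as [N HN].
  specialize (Hx N). lra.
Qed.

Lemma Un_cv_dist_le U l x B n :
  Un_cv U l -> (forall p, (n <= p)%nat -> Rabs (U p - x) <= B) -> Rabs (l - x) <= B.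
Proof.
  intros HU HB. apply Rnot_lt_le. intro Hlt.
  destruct (HU (Rabs (l - x) - B)) as [N HN]; [lra|].
  specialize (HN (Nat.max N n) ltac:(lia)). specialize (HB (Nat.max N n) ltac:(lia)).
  unfold Rdist in HN. rewrite Rabs_minus_sym in HN.
  pose proof (Rabs_triang (l - U (Nat.max N n)) (U (Nat.max N n) - x)).
  replace (l - U (Nat.max N n) + (U (Nat.max N n) - x)) with (l - x) in * by ring.
  lra.
Qed.

Section Contraction.

Variables (T : grid -> grid) (rho c : R).
Hypothesis c_range : 0 <= c < 1.
Hypothesis T_maps_ball : forall w, bounded_by rho w -> bounded_by rho (T w).
Hypothesis T_contracts : forall a b M,
  bounded_by rho a -> bounded_by rho b -> bounded_by M (fun j => a j - b j) ->
  bounded_by (c * M) (fun j => T a j - T b j).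

Lemma contraction_fixed_point_unique a b :
  bounded_by rho a -> bounded_by rho b ->
  (forall k, T a k = a k) -> (forall k, T b k = b k) -> forall k, a k = b k.
Proof.
  intros Ha Hb Fa Fb.
  assert (Hab : forall n, bounded_by (2 * rho * c ^ n) (fun j => a j - b j)).
  { induction n as [|n IHn]; intro j.
    - rewrite pow_O, Rmult_1_r, <- Rplus_diag. exact (bounded_by_sub _ _ _ _ Ha Hb j).
    - rewrite <- Fa, <- Fb.
      replace (2 * rho * c ^ S n) with (c * (2 * rho * c ^ n)) by (simpl; ring).
      exact (T_contracts _ _ _ Ha Hb IHn j). }
  intro k. apply Rminus_diag_uniq, (eq0_of_geometric_bound c (2 * rho)); [exact c_range|].
  intro n. apply Hab.
Qed.

Hypothesis rho_ge0 : 0 <= rho.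

Let iterate (n : nat) : grid := Nat.iter n T (fun _ => 0).

Lemma iterate_bounded n : bounded_by rho (iterate n).
Proof.
  induction n as [|n IHn]; [intro j; simpl; rewrite Rabs_R0; exact rho_ge0|].
  exact (T_maps_ball _ IHn).
Qed.

Lemma iterate_step n : bounded_by (2 * rho * c ^ n) (fun j => iterate (S n) j - iterate n j).
Proof.
  induction n as [|n IHn].
  - rewrite pow_O, Rmult_1_r, <- Rplus_diag. apply bounded_by_sub; apply iterate_bounded.
  - replace (2 * rho * c ^ S n) with (c * (2 * rho * c ^ n)) by (simpl; ring).
    exact (T_contracts _ _ _ (iterate_bounded (S n)) (iterate_bounded n) IHn).
Qed.

Lemma iterate_tail n p : (n <= p)%nat ->
  bounded_by (2 * rho / (1 - c) * c ^ n) (fun j => iterate p j - iterate n j).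
Proof.
  intros Hnp j. replace p with (n + (p - n))%nat by lia.
  assert (Hsum : forall d, Rabs (iterate (n + d)%nat j - iterate n j)
                           <= 2 * rho * (c ^ n - c ^ (n + d)) / (1 - c)).
  { induction d as [|d IHd].
    - rewrite Nat.add_0_r, !Rminus_eq_0, Rabs_R0. right. field. lra.
    - replace (iterate (n + S d)%nat j - iterate n j)
        with ((iterate (S (n + d)) j - iterate (n + d)%nat j)
              + (iterate (n + d)%nat j - iterate n j))
        by (rewrite Nat.add_succ_r; ring).
      eapply Rle_trans; [apply Rabs_triang|].
      eapply Rle_trans; [apply Rplus_le_compat; [apply iterate_step|exact IHd]|].
      rewrite Nat.add_succ_r. simpl. right. field. lra. }
  eapply Rle_trans; [apply Hsum|].
  pose proof (pow_le c (n + (p - n)) (proj1 c_range)).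
  replace (2 * rho * (c ^ n - c ^ (n + (p - n))) / (1 - c))
    with (2 * rho / (1 - c) * (c ^ n - c ^ (n + (p - n)))) by (field; lra).
  apply Rmult_le_compat_l; [apply Rdiv_le_0_compat|]; lra.
Qed.

Lemma iterate_cauchy j : Cauchy_crit (fun n => iterate n j).
Proof.
  intros eps Heps.
  destruct (geometric_eventually_lt c (2 * (2 * rho / (1 - c))) eps c_range Heps) as [N HN].
  exists N. intros n p Hn Hp. unfold Rdist.
  replace (iterate n j - iterate p j)
    with ((iterate n j - iterate N j) - (iterate p j - iterate N j)) by ring.
  eapply Rle_lt_trans; [apply Rabs_triang|]. rewrite Rabs_Ropp.
  pose proof (iterate_tail N n Hn j). pose proof (iterate_tail N p Hp j). lra.
Qed.

Lemma contraction_fixed_point_exists : exists v, bounded_by rho v /\ forall k, T v k = v k.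
Proof.
  set (v := fun j => proj1_sig (R_complete _ (iterate_cauchy j))).
  assert (v_lim : forall j, Un_cv (fun n => iterate n j) (v j)).
  { intro j. exact (proj2_sig (R_complete _ (iterate_cauchy j))). }
  assert (v_near : forall n, bounded_by (2 * rho / (1 - c) * c ^ n) (fun j => v j - iterate n j)).
  { intros n j. apply (Un_cv_dist_le _ _ _ _ n (v_lim j)). intros p Hp. apply iterate_tail, Hp. }
  assert (v_bounded : bounded_by rho v).
  { intro j. rewrite <- (Rminus_0_r (v j)). apply (Un_cv_dist_le _ _ _ _ 0 (v_lim j)).
    intros p _. rewrite Rminus_0_r. apply iterate_bounded. }
  exists v. split; [exact v_bounded|]. intro k.
  apply Rminus_diag_uniq, (eq0_of_geometric_bound c (2 * (2 * rho / (1 - c)) * c) _ c_range).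
  intro n.
  replace (T v k - v k) with ((T v k - T (iterate n) k) - (v k - iterate (S n) k)) by (simpl; ring).
  eapply Rle_trans; [apply Rabs_triang|]. rewrite Rabs_Ropp.
  pose proof (T_contracts _ _ _ v_bounded (iterate_bounded n) (v_near n) k).
  pose proof (v_near (S n) k). simpl pow in *. lra.
Qed.
End Contraction.

Lemma periodic_add_mul K v : periodic K v -> forall z j, v (j + z * Z.of_nat K)%Z = v j.
Proof.
  intros Hv z. induction z as [|z IHz|z IHz] using Z.peano_ind; intro j.
  - now rewrite Z.mul_0_l, Z.add_0_r.
  - now rewrite Z.mul_succ_l, Z.add_assoc, Hv.
  - rewrite <- (IHz j), <- Hv. f_equal. unfold Z.pred. ring.
Qed.

Lemma fold_right_Rmax_ge l x : In x l -> x <= fold_right Rmax 0 l.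
Proof.
  induction l as [|y l IHl]; [intros []|].
  intros [<-|Hx]; simpl; [apply Rmax_l|].
  eapply Rle_trans; [exact (IHl Hx)|apply Rmax_r].
Qed.

Lemma fold_right_Rmax_le l M :
  0 <= M -> (forall x, In x l -> x <= M) -> fold_right Rmax 0 l <= M.
Proof.
  intros HM. induction l as [|y l IHl]; intro Hl; simpl; [exact HM|].
  apply Rmax_lub; [apply Hl; left; reflexivity|].
  apply IHl. intros x Hx. apply Hl. right. exact Hx.
Qed.

Lemma bounded_by_supnorm K v : (0 < K)%nat -> periodic K v -> bounded_by (supnorm K v) v.
Proof.
  intros HK Hv k.
  assert (HKz : (0 < Z.of_nat K)%Z) by lia.
  assert (Hk : v k = v (Z.of_nat (Z.to_nat (k mod Z.of_nat K)))).
  { rewrite Z2Nat.id by (apply Z.mod_pos_bound; exact HKz).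
    rewrite <- (periodic_add_mul K v Hv (k / Z.of_nat K) (k mod Z.of_nat K)).
    f_equal. pose proof (Z.div_mod k (Z.of_nat K)). lia. }
  rewrite Hk. apply fold_right_Rmax_ge, (in_map (fun i => Rabs (v (Z.of_nat i)))), in_seq.
  pose proof (Z.mod_pos_bound k (Z.of_nat K) HKz). lia.
Qed.

Lemma supnorm_le K v M : bounded_by M v -> supnorm K v <= M.
Proof.
  intro Hv. apply fold_right_Rmax_le; [exact (bounded_by_ge0 M v Hv)|].
  intros x Hx. apply in_map_iff in Hx. destruct Hx as [i [<- _]]. apply Hv.
Qed.

(* Reals also exports constants named d1 and d2, hence the qualified names. *)
Section Scheme.

Variables alpha beta dt dx : R.
Hypothesis dx_pos : 0 < dx.

Lemma Rabs_d1_le B v k : bounded_by B v -> Rabs (Defs.d1 dx v k) <= B / dx.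
Proof.
  intro Hv. unfold Defs.d1.
  replace (B / dx) with (2 * B / (2 * dx)) by (field; lra).
  apply Rabs_div_le; [lra|].
  apply Rabs_le_between.
  pose proof (bounded_by_between _ _ (k + 1)%Z Hv).
  pose proof (bounded_by_between _ _ (k - 1)%Z Hv). lra.
Qed.

(* The composite stencil has weights (1, -2, 0, 2, -1) / (2 dx^3); bounding d1 and d2
   separately would give 4 instead of 3, too weak for the thresholds eps1 and eps2. *)
Lemma Rabs_d1_d2_le B v k :
  bounded_by B v -> Rabs (Defs.d1 dx (Defs.d2 dx v) k) <= 3 * B / dx ^ 3.
Proof.
  intro Hv. unfold Defs.d1, Defs.d2.
  replace (k + 1 + 1)%Z with (k + 2)%Z by ring. replace (k + 1 - 1)%Z with k by ring.
  replace (k - 1 + 1)%Z with k by ring. replace (k - 1 - 1)%Z with (k - 2)%Z by ring.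
  replace (3 * B / dx ^ 3) with (6 * B / (2 * dx ^ 3)) by (field; lra).
  match goal with |- Rabs ?e <= _ =>
    replace e with ((v (k + 2)%Z - 2 * v (k + 1)%Z + 2 * v (k - 1)%Z - v (k - 2)%Z) / (2 * dx ^ 3))
      by (field; lra) end.
  apply Rabs_div_le; [pose proof (pow_lt dx 3 dx_pos); lra|].
  apply Rabs_le_between.
  pose proof (bounded_by_between _ _ (k + 2)%Z Hv).
  pose proof (bounded_by_between _ _ (k + 1)%Z Hv).
  pose proof (bounded_by_between _ _ (k - 1)%Z Hv).
  pose proof (bounded_by_between _ _ (k - 2)%Z Hv). lra.
Qed.

Definition kdv_form (N S : grid) : grid := fun k =>
  - (alpha / 6) * Defs.d1 dx N k + beta * Defs.d1 dx (Defs.d2 dx S) k.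

Definition kdv_rhs (u w : grid) : grid :=
  kdv_form (fun j => w j ^ 2 + w j * u j + u j ^ 2) (fun j => (w j + u j) / 2).

Definition scheme_map (u w : grid) : grid := fun k => u k + dt * kdv_rhs u w k.

Definition form_bound (BN BS : R) : R :=
  Rabs alpha / 6 * (BN / dx) + Rabs beta * (3 * BS / dx ^ 3).

Lemma form_bound_ge0 BN BS : 0 <= BN -> 0 <= BS -> 0 <= form_bound BN BS.
Proof.
  intros HN HS. pose proof (pow_lt dx 3 dx_pos).
  pose proof (Rabs_pos alpha). pose proof (Rabs_pos beta).
  unfold form_bound. apply Rplus_le_le_0_compat; apply Rmult_le_pos;
    solve [lra | apply Rdiv_le_0_compat; lra].
Qed.

Lemma Rabs_kdv_form_le BN BS N S k :
  bounded_by BN N -> bounded_by BS S -> Rabs (kdv_form N S k) <= form_bound BN BS.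
Proof.
  intros HN HS. unfold kdv_form, form_bound.
  eapply Rle_trans; [apply Rabs_triang|].
  rewrite !Rabs_mult, Rabs_Ropp, Rabs_div, (Rabs_pos_eq 6) by lra.
  pose proof (Rabs_pos alpha). pose proof (Rabs_pos beta).
  apply Rplus_le_compat; apply Rmult_le_compat_l.
  - lra.
  - exact (Rabs_d1_le _ _ _ HN).
  - lra.
  - exact (Rabs_d1_d2_le _ _ _ HS).
Qed.

Lemma kdv_form_sub N1 S1 N2 S2 k :
  kdv_form N1 S1 k - kdv_form N2 S2 k = kdv_form (fun j => N1 j - N2 j) (fun j => S1 j - S2 j) k.
Proof. unfold kdv_form, Defs.d1, Defs.d2. field. lra. Qed.

Lemma kdv_form_translate s N S k :
  kdv_form (fun j => N (j + s)%Z) (fun j => S (j + s)%Z) k = kdv_form N S (k + s)%Z.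
Proof.
  (* The two sides differ only in how the integer indices are associated. *)
  unfold kdv_form, Defs.d1, Defs.d2. repeat (first [ring | f_equal]).
Qed.

Lemma kdv_form_ext N S N' S' k :
  (forall j, N j = N' j) -> (forall j, S j = S' j) -> kdv_form N S k = kdv_form N' S' k.
Proof. intros HN HS. unfold kdv_form, Defs.d1, Defs.d2. rewrite !HN, !HS. reflexivity. Qed.

Lemma Rabs_kdv_rhs_le A r u w k :
  bounded_by r u -> bounded_by A w ->
  Rabs (kdv_rhs u w k) <= form_bound (A ^ 2 + A * r + r ^ 2) ((A + r) / 2).
Proof.
  intros Hu Hw. apply Rabs_kdv_form_le; intro j; apply Rabs_le;
    pose proof (bounded_by_between _ _ j Hu); pose proof (bounded_by_between _ _ j Hw).
  - split; nra.
  - lra.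
Qed.

Lemma Rabs_kdv_rhs_sub_le A r M u a b k :
  bounded_by r u -> bounded_by A a -> bounded_by A b -> bounded_by M (fun j => a j - b j) ->
  Rabs (kdv_rhs u a k - kdv_rhs u b k) <= M * form_bound (2 * A + r) (1 / 2).
Proof.
  intros Hu Ha Hb Hab. unfold kdv_rhs. rewrite kdv_form_sub.
  replace (M * form_bound (2 * A + r) (1 / 2)) with (form_bound (M * (2 * A + r)) (M / 2))
    by (unfold form_bound; field; lra).
  apply Rabs_kdv_form_le; intro j.
  - replace (a j ^ 2 + a j * u j + u j ^ 2 - (b j ^ 2 + b j * u j + u j ^ 2))
      with ((a j - b j) * (a j + b j + u j)) by ring.
    rewrite Rabs_mult. apply Rmult_le_compat; try apply Rabs_pos; [apply Hab|].
    apply Rabs_le. pose proof (bounded_by_between _ _ j Hu).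
    pose proof (bounded_by_between _ _ j Ha). pose proof (bounded_by_between _ _ j Hb). lra.
  - replace ((a j + u j) / 2 - (b j + u j) / 2) with ((a j - b j) / 2) by field.
    apply Rabs_div_le; [lra|apply Hab].
Qed.

Lemma scheme_step_iff u w :
  0 < dt -> scheme_step alpha beta dt dx u w <-> forall k, scheme_map u w k = w k.
Proof.
  intro Hdt.
  change ((forall k, (w k - u k) / dt = kdv_rhs u w k) <-> (forall k, scheme_map u w k = w k)).
  unfold scheme_map. split; intros H k; rewrite <- H; field; lra.
Qed.

Lemma scheme_map_bounded A r u w :
  0 <= dt -> bounded_by r u -> bounded_by A w ->
  bounded_by (r + dt * form_bound (A ^ 2 + A * r + r ^ 2) ((A + r) / 2)) (scheme_map u w).
Proof.
  intros Hdt Hu Hw k. unfold scheme_map.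
  eapply Rle_trans; [apply Rabs_triang|].
  rewrite Rabs_mult, (Rabs_pos_eq dt Hdt).
  apply Rplus_le_compat; [apply Hu|].
  apply Rmult_le_compat_l; [exact Hdt|exact (Rabs_kdv_rhs_le _ _ _ _ _ Hu Hw)].
Qed.

Lemma scheme_map_lipschitz A r M u a b :
  0 <= dt -> bounded_by r u -> bounded_by A a -> bounded_by A b ->
  bounded_by M (fun j => a j - b j) ->
  bounded_by (dt * form_bound (2 * A + r) (1 / 2) * M)
    (fun j => scheme_map u a j - scheme_map u b j).
Proof.
  intros Hdt Hu Ha Hb Hab k. unfold scheme_map.
  replace (u k + dt * kdv_rhs u a k - (u k + dt * kdv_rhs u b k))
    with (dt * (kdv_rhs u a k - kdv_rhs u b k)) by ring.
  rewrite Rabs_mult, (Rabs_pos_eq dt Hdt), Rmult_assoc, (Rmult_comm _ M).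
  apply Rmult_le_compat_l; [exact Hdt|exact (Rabs_kdv_rhs_sub_le _ _ _ _ _ _ _ Hu Ha Hb Hab)].
Qed.

Lemma scheme_map_translate K u w k : periodic K u ->
  scheme_map u (fun j => w (j + Z.of_nat K)%Z) k = scheme_map u w (k + Z.of_nat K)%Z.
Proof.
  intro Hu. unfold scheme_map, kdv_rhs. rewrite Hu, <- kdv_form_translate.
  do 2 f_equal. apply kdv_form_ext; intro j; rewrite Hu; reflexivity.
Qed.
End Scheme.

Lemma kdv_eps_denominator_pos alpha beta dx X r Y :
  beta <> 0 -> 0 <= X -> 0 <= r -> 0 < Y ->
  0 < Rabs alpha / 6 * dx ^ 2 * X * r + 3 / 2 * Rabs beta * Y.
Proof.
  intros Hbeta HX Hr HY.
  pose proof (Rabs_pos alpha). pose proof (Rabs_pos_lt beta Hbeta). pose proof (pow2_ge_0 dx).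
  assert (0 <= Rabs alpha / 6 * dx ^ 2 * X * r).
  { apply Rmult_le_pos; [apply Rmult_le_pos; [apply Rmult_le_pos|]|]; lra. }
  nra.
Qed.

Lemma form_bound_eps1 alpha beta dt q r dx :
  0 < dx -> beta <> 0 -> 1 < q -> 0 <= r -> dt < kdv_eps1 alpha beta q r dx ->
  r + dt * form_bound alpha beta dx ((q * r) ^ 2 + q * r * r + r ^ 2) ((q * r + r) / 2) <= q * r.
Proof.
  intros Hdx Hbeta Hq Hr Hdt. unfold kdv_eps1 in Hdt.
  set (E := Rabs alpha / 6 * dx ^ 2 * (q ^ 2 + q + 1) * r + 3 / 2 * Rabs beta * (q + 1)) in Hdt.
  pose proof (pow_lt dx 3 Hdx).
  assert (HE : 0 < E) by (apply kdv_eps_denominator_pos; nra).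
  rewrite <- Rlt_div_r in Hdt by exact HE.
  replace (form_bound alpha beta dx ((q * r) ^ 2 + q * r * r + r ^ 2) ((q * r + r) / 2))
    with (r * E / dx ^ 3) by (unfold E, form_bound; field; lra).
  replace (dt * (r * E / dx ^ 3)) with (r * (dt * E / dx ^ 3)) by (field; lra).
  assert (dt * E / dx ^ 3 < q - 1) by (apply Rlt_div_l; lra).
  nra.
Qed.

Lemma form_bound_eps2 alpha beta dt q r dx :
  0 < dx -> beta <> 0 -> 0 <= q -> 0 <= r -> dt < kdv_eps2 alpha beta q r dx ->
  dt * form_bound alpha beta dx (2 * (q * r) + r) (1 / 2) < 1.
Proof.
  intros Hdx Hbeta Hq Hr Hdt. unfold kdv_eps2 in Hdt.
  set (E := Rabs alpha / 6 * dx ^ 2 * (2 * q + 1) * r + 3 / 2 * Rabs beta) in Hdt.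
  pose proof (pow_lt dx 3 Hdx).
  assert (HE : 0 < E).
  { unfold E. rewrite <- (Rmult_1_r (3 / 2 * Rabs beta)). apply kdv_eps_denominator_pos; lra. }
  rewrite <- Rlt_div_r in Hdt by exact HE.
  replace (dt * form_bound alpha beta dx (2 * (q * r) + r) (1 / 2)) with (dt * E / dx ^ 3)
    by (unfold E, form_bound; field; lra).
  apply Rlt_div_l; lra.
Qed.

Lemma scheme_map_maps_ball alpha beta dt q r dx u w :
  0 < dx -> 0 <= dt -> beta <> 0 -> 1 < q -> dt < kdv_eps1 alpha beta q r dx ->
  bounded_by r u -> bounded_by (q * r) w -> bounded_by (q * r) (scheme_map alpha beta dt dx u w).
Proof.
  intros Hdx Hdt Hbeta Hq Heps Hu Hw j.
  eapply Rle_trans; [exact (scheme_map_bounded _ _ _ _ Hdx _ _ _ _ Hdt Hu Hw j)|].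
  exact (form_bound_eps1 _ _ _ _ _ _ Hdx Hbeta Hq (bounded_by_ge0 _ _ Hu) Heps).
Qed.

Theorem theorem3p1
  (L : R) (K : nat) (dt alpha beta q r : R) (m : nat) (u : nat -> grid) :
  0 < L -> (0 < K)%nat -> 0 < dt -> beta <> 0 -> 1 < q ->
  (forall n : nat, (n <= m)%nat -> periodic K (u n)) ->
  (forall n : nat, (n < m)%nat ->
     scheme_step alpha beta dt (L / INR K) (u n) (u (S n))) ->
  (forall m' : nat, (m' <= m)%nat -> supnorm K (u m') <= r) ->
  dt < Rmin (kdv_eps1 alpha beta q r (L / INR K)) (kdv_eps2 alpha beta q r (L / INR K)) ->
  exists v : grid,
    periodic K v /\
    scheme_step alpha beta dt (L / INR K) (u m) v /\
    supnorm K v <= q * r /\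
    (forall w : grid,
       periodic K w ->
       scheme_step alpha beta dt (L / INR K) (u m) w ->
       supnorm K w <= q * r ->
       forall k : Z, w k = v k).
Proof.
  (* Only the bound on u m matters, not how it was produced by the earlier steps. *)
  intros HL HK Hdt Hbeta Hq Hper _ Hsup Heps.
  set (dx := L / INR K) in *.
  assert (Hdx : 0 < dx) by (apply Rdiv_lt_0_compat; [exact HL|apply lt_0_INR, HK]).
  assert (Hum : bounded_by r (u m)).
  { intro j. eapply Rle_trans; [apply bounded_by_supnorm, Hper|apply Hsup]; lia. }
  pose proof (bounded_by_ge0 _ _ Hum) as Hr.
  assert (Hqr : 0 <= q * r) by nra.
  set (T := scheme_map alpha beta dt dx (u m)).
  set (c := dt * form_bound alpha beta dx (2 * (q * r) + r) (1 / 2)).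
  assert (Hc : 0 <= c < 1).
  { split; [apply Rmult_le_pos; [lra|apply form_bound_ge0; lra]|].
    apply form_bound_eps2; try lra. exact (Rlt_le_trans _ _ _ Heps (Rmin_r _ _)). }
  pose proof (fun w => scheme_map_maps_ball alpha beta dt q r dx (u m) w Hdx (Rlt_le _ _ Hdt)
                         Hbeta Hq (Rlt_le_trans _ _ _ Heps (Rmin_l _ _)) Hum) as T_ball.
  pose proof (fun a b M => scheme_map_lipschitz alpha beta dt dx Hdx (q * r) r M (u m) a b
                             (Rlt_le _ _ Hdt) Hum) as T_contr.
  pose proof (contraction_fixed_point_unique T (q * r) c Hc T_contr) as Huniq.
  destruct (contraction_fixed_point_exists T (q * r) c Hc T_ball T_contr Hqr) as [v [Hv Hfix]].
  exists v. split; [|split; [|split]].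
  - intro k. apply (Huniq (fun j => v (j + Z.of_nat K)%Z) v); [intro; apply Hv|exact Hv| |exact Hfix].
    intro j. unfold T. rewrite scheme_map_translate by (apply Hper; lia). apply Hfix.
  - apply scheme_step_iff; [exact Hdt|exact Hfix].
  - apply supnorm_le, Hv.
  - intros w Hwp Hw Hwn.
    apply Huniq; [|exact Hv|apply scheme_step_iff; [exact Hdt|exact Hw]|exact Hfix].
    intro j. eapply Rle_trans; [apply bounded_by_supnorm|]; eassumption.
Qed.
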